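(* Let $(Y,\|\ \|)$ be a normed $K$-vector space with an orthogonal basis $\{x_\ell\}_{\ell\in I}$ (i.e. $\|\sum c_\ell x_\ell\|=\sup_\ell|c_\ell|\,\|x_\ell\|$ for all vectors $\sum c_\ell x_\ell\in Y$), and let $\le$ be a partial order on $I$ such that every nonempty subset of $I$ has a minimal element and $\{\ell\in I:\ell\le k\}$ is finite for every $k\in I$. Suppose $\|x_\ell\|\le\|x_k\|$ whenever $\ell\le k$, and let $c_{\ell k}\in K$ with $|c_{\ell k}|\le1$ be given for all $\ell\le k$. Then the vectors $y_k:=x_k+\sum_{\ell<k}c_{\ell k}x_\ell$ ($k\in I$) form another orthogonal basis of $Y$, and $\|y_k\|=\|x_k\|$.
   Context: $K$ is a complete extension field of $\mathbb{Q}_p$ with absolute value $|\ |$. A basis means an algebraic basis of the vector space $Y$. *)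

From HB Require Import structures.
From mathcomp Require Import all_boot all_order all_algebra.
From mathcomp Require Import boolp classical_sets functions cardinality fsbigop reals.
Set Implicit Arguments. Unset Strict Implicit. Unset Printing Implicit Defensive.
Import Order.TTheory GRing.Theory Num.Theory.
Local Open Scope classical_set_scope.
Local Open Scope ring_scope.

Section Defs.
Variable R : realType.

(* K is a complete field with absolute value |.| : K -> R extending the
   p-adic absolute value of Q (|p| = 1/p), i.e. a complete extension of Q_p. *)
Definition padic_complete_field (p : nat) (K : fieldType) (abs : K -> R) : Prop :=
  [/\ prime p, (
      (forall a : K, 0 <= abs a) /\
      (forall a : K, abs a = 0 <-> a = 0) /\
      (forall a b : K, abs (a * b) = abs a * abs b) /\
      (forall a b : K, abs (a + b) <= Num.max (abs a) (abs b))),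
      abs (p%:R : K) = (p%:R : R)^-1 &
      (forall u : nat -> K,
        (forall e : R, 0 < e -> exists N : nat, forall m n : nat,
            (N <= m)%N -> (N <= n)%N -> abs (u m - u n) < e) ->
        exists l : K, forall e : R, 0 < e -> exists N : nat, forall n : nat,
            (N <= n)%N -> abs (u n - l) < e)].

Variables (K : fieldType) (abs : K -> R).

Definition normed_space (Y : lmodType K) (nrm : Y -> R) : Prop :=
  [/\ (forall y : Y, 0 <= nrm y),
      (forall y : Y, nrm y = 0 <-> y = 0),
      (forall (a : K) (y : Y), nrm (a *: y) = abs a * nrm y) &
      (forall y z : Y, nrm (y + z) <= Num.max (nrm y) (nrm z))].

Variables (Y : lmodType K) (nrm : Y -> R) (I : choiceType).

Definition fsupp (c : I -> K) : set I := [set i | c i != 0].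

Definition lincomb (x : I -> Y) (c : I -> K) : Y :=
  \sum_(i \in fsupp c) c i *: x i.

Definition is_basis (x : I -> Y) : Prop :=
  forall y : Y, exists! c : I -> K, finite_set (fsupp c) /\ y = lincomb x c.

Definition orthogonal_basis (x : I -> Y) : Prop :=
  is_basis x /\
  forall c : I -> K, finite_set (fsupp c) ->
    nrm (lincomb x c) = sup (range (fun l => abs (c l) * nrm (x l))).

End Defs.

(* Write Σ_k d_k y_k = Σ_l e_l x_l. Since y_k = x_k + Σ_{l<k} c_lk x_l, the
   coordinate e_l is a sum of terms d_k c_lk with l ≤ k (and c_kk = 1), so the
   ultrametric inequality, |c_lk| ≤ 1 and ‖x_l‖ ≤ ‖x_k‖ give
   |e_l| ‖x_l‖ ≤ max_k |d_k| ‖x_k‖.  Equality holds at an index k0 that maximises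
   |d_k| ‖x_k‖ and is ≤-maximal among the maximisers: every other term d_k c_k0k
   of e_k0 is strictly smaller than d_k0 in absolute value, hence |e_k0| = |d_k0|.  Therefore
   ‖Σ d_k y_k‖ = max_k |d_k| ‖x_k‖, which yields ‖y_k‖ = ‖x_k‖, orthogonality
   and linear independence.  The y_k span Y because x_l = y_l - Σ_{m<l} c_ml x_m,
   by well-founded induction on ≤.  Only the ultrametric absolute value of K is
   used; neither the residue characteristic nor completeness plays a role. *)

From HB Require Import structures.
From mathcomp Require Import all_boot all_order all_algebra finmap.
From mathcomp Require Import boolp classical_sets functions cardinality fsbigop reals.
Set Implicit Arguments. Unset Strict Implicit. Unset Printing Implicit Defensive.
Import Order.TTheory GRing.Theory Num.Theory.
Local Open Scope classical_set_scope.
Local Open Scope ring_scope.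

Section Ultrametric.
Variables (R : realType) (K : fieldType) (abs : K -> R).
Hypothesis abs_ge0 : forall a : K, 0 <= abs a.
Hypothesis abs_eq0 : forall a : K, abs a = 0 <-> a = 0.
Hypothesis absM : forall a b : K, abs (a * b) = abs a * abs b.
Hypothesis absD : forall a b : K, abs (a + b) <= Num.max (abs a) (abs b).

Lemma abs0 : abs 0 = 0.
Proof. exact/abs_eq0. Qed.

Lemma abs_gt0 a : a != 0 -> 0 < abs a.
Proof.
by move=> a0; rewrite lt_def abs_ge0 andbT; apply: contra a0 => /eqP/abs_eq0->.
Qed.

Lemma abs1 : abs 1 = 1.
Proof.
have abs1_neq0 : abs 1 != 0 by rewrite gt_eqF ?abs_gt0 ?oner_eq0.
by apply: (mulIf abs1_neq0); rewrite -absM !mul1r.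
Qed.

Lemma absN a : abs (- a) = abs a.
Proof.
suff absN1 : abs (-1) = 1 by rewrite -mulN1r absM absN1 mul1r.
by apply/eqP; rewrite -sqrp_eq1 // expr2 -absM mulrNN mulr1 abs1.
Qed.

Lemma absDl_eq a b : abs b < abs a -> abs (a + b) = abs a.
Proof.
move=> ba; apply/eqP; rewrite eq_le (le_trans (absD a b)) /=; last first.
  by rewrite ge_max lexx ltW.
have := absD (a + b) (- b); rewrite addrK absN le_max => /orP[//|ab].
by have := lt_le_trans ba ab; rewrite ltxx.
Qed.

Section WeightedSum.
Variables (I : eqType) (s : seq I) (F : I -> K) (rho B : R).
Hypothesis rho_ge0 : 0 <= rho.

Lemma abs_sum_le : 0 <= B -> (forall i, i \in s -> abs (F i) * rho <= B) ->
  abs (\sum_(i <- s) F i) * rho <= B.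
Proof.
move=> B_ge0 FB; rewrite big_seq; elim/big_ind: _ => //; first by rewrite abs0 mul0r.
move=> u v uB vB; apply: le_trans (ler_wpM2r rho_ge0 (absD u v)) _.
by rewrite maxr_pMl // ge_max uB vB.
Qed.

Lemma abs_sum_lt : 0 < B -> (forall i, i \in s -> abs (F i) * rho < B) ->
  abs (\sum_(i <- s) F i) * rho < B.
Proof.
move=> B_gt0 FB; rewrite big_seq; elim/big_ind: _ => //; first by rewrite abs0 mul0r.
move=> u v uB vB; apply: le_lt_trans (ler_wpM2r rho_ge0 (absD u v)) _.
by rewrite maxr_pMl // gt_max uB vB.
Qed.

End WeightedSum.
End Ultrametric.

Section LinearCombinations.
Variables (K : fieldType) (Y : lmodType K) (I : choiceType).
Implicit Types (z : I -> Y) (d : I -> K) (r : seq I).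

Lemma notin_fsupp d i : ~ fsupp d i -> d i = 0.
Proof. by move/negP; rewrite negbK => /eqP. Qed.

Lemma fsupp0 : fsupp (fun=> 0 : K) = set0 :> set I.
Proof. by apply/seteqP; split=> i /=; [rewrite /fsupp /= eqxx|]. Qed.

Lemma mem_fset_fsupp d i : finite_set (fsupp d) ->
  (i \in fset_set (fsupp d)) = (d i != 0).
Proof. by move=> fd; rewrite in_fset_set //; apply/idP/idP; rewrite inE. Qed.

Lemma lincomb_seq z d r : uniq r -> fsupp d `<=` [set` r] ->
  lincomb z d = \sum_(i <- r) d i *: z i.
Proof.
move=> r_uniq dr; rewrite /lincomb (fsbig_fwiden r) // => i [_ /notin_fsupp di0].
by rewrite /= di0 scale0r.
Qed.

Lemma lincomb0 z : lincomb z (fun=> 0) = 0.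
Proof. by rewrite /lincomb fsupp0 fsbig_set0. Qed.

Definition delta k : I -> K := fun i => (i == k)%:R.

Lemma fsupp_delta k : fsupp (delta k) `<=` [set k].
Proof.
by move=> i; rewrite /fsupp /delta /=; have [|_] := eqVneq i k; rewrite /= ?eqxx.
Qed.

Lemma finite_fsupp_delta k : finite_set (fsupp (delta k)).
Proof. exact: sub_finite_set (@fsupp_delta k) (finite_set1 k). Qed.

Lemma lincomb_delta z k : lincomb z (delta k) = z k.
Proof.
rewrite (@lincomb_seq z _ [:: k]) // => [|i /fsupp_delta ->]; last exact: mem_head.
by rewrite big_seq1 /delta eqxx scale1r.
Qed.

Lemma fsuppD d1 d2 : fsupp (d1 \+ d2) `<=` fsupp d1 `|` fsupp d2.
Proof.
move=> i; apply: contraPP => /not_orP[/notin_fsupp d1i /notin_fsupp d2i].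
by rewrite /fsupp /= d1i d2i addr0 eqxx.
Qed.

Lemma finite_fsuppD d1 d2 : finite_set (fsupp d1) -> finite_set (fsupp d2) ->
  finite_set (fsupp (d1 \+ d2)).
Proof. by move=> f1 f2; apply: sub_finite_set (@fsuppD d1 d2) _; rewrite finite_setU. Qed.

Lemma fsuppB d1 d2 : fsupp (d1 \- d2) `<=` fsupp d1 `|` fsupp d2.
Proof.
move=> i; apply: contraPP => /not_orP[/notin_fsupp d1i /notin_fsupp d2i].
by rewrite /fsupp /= d1i d2i subrr eqxx.
Qed.

Lemma finite_fsuppB d1 d2 : finite_set (fsupp d1) -> finite_set (fsupp d2) ->
  finite_set (fsupp (d1 \- d2)).
Proof. by move=> f1 f2; apply: sub_finite_set (@fsuppB d1 d2) _; rewrite finite_setU. Qed.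

Lemma fsuppZ a d : fsupp (fun i => a * d i) `<=` fsupp d.
Proof. by move=> i; rewrite /fsupp /= mulf_eq0 negb_or => /andP[]. Qed.

Lemma finite_fsuppZ a d : finite_set (fsupp d) -> finite_set (fsupp (fun i => a * d i)).
Proof. by move=> fd; apply: sub_finite_set fd; apply: fsuppZ. Qed.

Lemma lincombD z d1 d2 : finite_set (fsupp d1) -> finite_set (fsupp d2) ->
  lincomb z (d1 \+ d2) = lincomb z d1 + lincomb z d2.
Proof.
move=> f1 f2; set r := fset_set (fsupp d1 `|` fsupp d2).
have r_uniq : uniq r := fset_uniq _.
have sub_r : fsupp d1 `|` fsupp d2 `<=` [set` r].
  by move=> i d12i /=; rewrite in_fset_set ?finite_setU // inE.
rewrite (lincomb_seq z r_uniq (subset_trans (@fsuppD d1 d2) sub_r)).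
rewrite (lincomb_seq z r_uniq (subset_trans (@subsetUl _ _ _) sub_r)).
rewrite (lincomb_seq z r_uniq (subset_trans (@subsetUr _ _ _) sub_r)).
by rewrite -big_split; apply: eq_bigr => i _; rewrite scalerDl.
Qed.

Lemma lincombZ z a d : finite_set (fsupp d) ->
  lincomb z (fun i => a * d i) = a *: lincomb z d.
Proof.
move=> fd; set r := fset_set (fsupp d).
have r_uniq : uniq r := fset_uniq _.
have sub_r : fsupp d `<=` [set` r] by move=> i di /=; rewrite in_fset_set // inE.
rewrite (lincomb_seq z r_uniq sub_r).
rewrite (lincomb_seq z r_uniq (subset_trans (@fsuppZ a d) sub_r)).
by rewrite scaler_sumr; apply: eq_bigr => i _; rewrite scalerA.
Qed.

Lemma lincombB z d1 d2 : finite_set (fsupp d1) -> finite_set (fsupp d2) ->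
  lincomb z (d1 \- d2) = lincomb z d1 - lincomb z d2.
Proof.
move=> f1 f2; have -> : d1 \- d2 = d1 \+ (fun i => -1 * d2 i).
  by apply: funext => i /=; rewrite mulN1r.
by rewrite lincombD ?lincombZ ?scaleN1r //; exact: finite_fsuppZ.
Qed.

Lemma fsupp_comp_sub (a : I -> I -> K) d :
  fsupp (fun l => \sum_(k \in fsupp d) d k * a k l) `<=`
  \bigcup_(k in fsupp d) fsupp (a k).
Proof.
move=> l /(fsbigN1 (f := fun l k => d k * a k l)) [k dk].
by rewrite mulf_eq0 negb_or => /andP[_ akl]; exists k.
Qed.

Lemma lincomb_comp z (a : I -> I -> K) d :
  (forall k, finite_set (fsupp (a k))) -> finite_set (fsupp d) ->
  lincomb (fun k => lincomb z (a k)) d =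
  lincomb z (fun l => \sum_(k \in fsupp d) d k * a k l).
Proof.
move=> fa fd; set S := \bigcup_(k in fsupp d) fsupp (a k).
have fS : finite_set S by apply: bigcup_finite.
set r := fset_set S; have r_uniq : uniq r := fset_uniq _.
have sub_r (A : set I) : A `<=` S -> A `<=` [set` r].
  by move=> sA i /sA Si /=; rewrite in_fset_set // inE.
rewrite [RHS](lincomb_seq z r_uniq (sub_r _ (@fsupp_comp_sub a d))).
rewrite {1}/lincomb fsbig_finite //.
transitivity (\sum_(k <- fset_set (fsupp d)) \sum_(l <- r) (d k * a k l) *: z l).
  apply: eq_big_seq => k; rewrite mem_fset_fsupp // => dk.
  rewrite (lincomb_seq z r_uniq (sub_r _ _)) ?scaler_sumr; last by move=> l; exists k.
  by apply: eq_bigr => l _; rewrite scalerA.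
by rewrite exchange_big; apply: eq_bigr => l _; rewrite -scaler_suml fsbig_finite.
Qed.

Lemma basis_neq0 z k : is_basis z -> z k != 0.
Proof.
move=> zb; apply/eqP => zk0; have [e [_ e_uniq]] := zb (z k).
have e_delta := e_uniq _ (conj (finite_fsupp_delta k) (esym (lincomb_delta z k))).
have e_zero : e = fun=> 0.
  by apply: e_uniq; rewrite fsupp0 lincomb0; split; [exact: finite_set0 | ].
by move: (congr1 (fun f => f k) (etrans (esym e_delta) e_zero)) => /= /eqP;
  rewrite /delta eqxx oner_eq0.
Qed.

Definition span z : set Y := [set v | exists2 d, finite_set (fsupp d) & v = lincomb z d].

Lemma span_gen z k : span z (z k).
Proof. by exists (delta k); [exact: finite_fsupp_delta | rewrite lincomb_delta]. Qed.

Lemma span0 z : span z 0.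
Proof. by exists (fun=> 0); rewrite ?lincomb0 // fsupp0. Qed.

Lemma spanD z u v : span z u -> span z v -> span z (u + v).
Proof.
move=> [d1 f1 ->] [d2 f2 ->]; exists (d1 \+ d2); first exact: finite_fsuppD.
by rewrite lincombD.
Qed.

Lemma spanZ z a v : span z v -> span z (a *: v).
Proof.
by move=> [d fd ->]; exists (fun i => a * d i); [exact: finite_fsuppZ | rewrite lincombZ].
Qed.

Lemma span_lincomb z w d : (forall i, span z (w i)) -> span z (lincomb w d).
Proof.
move=> zw; rewrite /lincomb; elim/big_ind: _ => [|u v|i _]; first exact: span0.
  exact: spanD.
exact/spanZ.
Qed.

End LinearCombinations.

Lemma sup_range_attained (T : Type) (R : realType) (f : T -> R) (i0 : T) :
  (forall i, f i <= f i0) -> sup (range f) = f i0.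
Proof.
move=> f_le; apply/eqP; rewrite eq_le; apply/andP; split.
  by apply: ge_sup; [exists (f i0), i0 | move=> _ [i _ <-]].
apply: sup_upper_bound; last by exists i0.
by split; [exists (f i0), i0 | exists (f i0) => _ [i _ <-]].
Qed.

Lemma seq_maximal (T : eqType) (lt : T -> T -> Prop) :
  (forall k, ~ lt k k) -> (forall k l m, lt k l -> lt l m -> lt k m) ->
  forall (s : seq T) k, k \in s -> exists2 m, m \in s & forall j, j \in s -> ~ lt m j.
Proof.
move=> lt_irr lt_trans; elim=> [//|b [|b' s] IH] k _.
  by exists b; rewrite ?mem_head // => j; rewrite mem_seq1 => /eqP ->.
have [m ms m_max] := IH b' (mem_head _ _).
have [mb|not_mb] := pselect (lt m b).
  exists b; first exact: mem_head.
  move=> j; rewrite in_cons => /orP[/eqP -> //|js] bj.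
  exact: m_max js (lt_trans _ _ _ mb bj).
exists m; first by rewrite in_cons ms orbT.
by move=> j; rewrite in_cons => /orP[/eqP -> //|/m_max].
Qed.

Section TriangularPerturbation.
Variables (R : realType) (K : fieldType) (abs : K -> R).
Hypothesis abs_ge0 : forall a : K, 0 <= abs a.
Hypothesis abs_eq0 : forall a : K, abs a = 0 <-> a = 0.
Hypothesis absM : forall a b : K, abs (a * b) = abs a * abs b.
Hypothesis absD : forall a b : K, abs (a + b) <= Num.max (abs a) (abs b).
Variables (Y : lmodType K) (nrm : Y -> R).
Hypothesis nrm_ge0 : forall v : Y, 0 <= nrm v.
Hypothesis nrm_eq0 : forall v : Y, nrm v = 0 <-> v = 0.
Variables (I : choiceType) (x : I -> Y).
Hypothesis x_basis : is_basis x.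
Hypothesis x_orth : forall d : I -> K, finite_set (fsupp d) ->
  nrm (lincomb x d) = sup (range (fun l => abs (d l) * nrm (x l))).
Variable prec : I -> I -> Prop.
Hypothesis prec_refl : forall k, prec k k.
Hypothesis prec_anti : forall k l, prec k l -> prec l k -> k = l.
Hypothesis prec_trans : forall k l m, prec k l -> prec l m -> prec k m.
Hypothesis prec_min : forall S : set I, S !=set0 ->
  exists m, S m /\ forall l, S l -> prec l m -> l = m.
Hypothesis prec_fin : forall k, finite_set [set l | prec l k].
Hypothesis nrm_x_le : forall l k, prec l k -> nrm (x l) <= nrm (x k).
Variable c : I -> I -> K.
Hypothesis abs_c_le1 : forall l k, prec l k -> abs (c l k) <= 1.
Implicit Types (d : I -> K) (k l : I).

Lemma prec_ind (P : I -> Prop) :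
  (forall k, (forall l, prec l k -> l <> k -> P l) -> P k) -> forall k, P k.
Proof.
move=> P_ind k; apply: contrapT => notPk.
have [m [notPm m_min]] := prec_min (ex_intro _ k notPk : [set k | ~ P k] !=set0).
apply: notPm; apply: P_ind => l lm lm_neq; apply: contrapT => notPl.
exact: lm_neq (m_min l notPl lm).
Qed.

Lemma nrm_x_gt0 k : 0 < nrm (x k).
Proof.
by rewrite lt_def nrm_ge0 andbT; apply: contra (basis_neq0 k x_basis) => /eqP/nrm_eq0->.
Qed.

Definition ytri k : Y := x k + \sum_(l \in [set l | prec l k /\ l <> k]) c l k *: x l.

Definition ycoef k l : K := if l == k then 1 else if `[< prec l k >] then c l k else 0.

Lemma ycoef_id k : ycoef k k = 1.
Proof. by rewrite /ycoef eqxx. Qed.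

Lemma ycoef_eq0 k l : ~ prec l k -> ycoef k l = 0.
Proof.
by move=> not_lk; rewrite /ycoef asboolF //; case: eqP => // lk; case: not_lk; rewrite lk.
Qed.

Lemma fsupp_ycoef k : fsupp (ycoef k) `<=` [set l | prec l k].
Proof. by move=> l; apply: contraPP => /ycoef_eq0 ykl; rewrite /fsupp /= ykl eqxx. Qed.

Lemma finite_fsupp_ycoef k : finite_set (fsupp (ycoef k)).
Proof. exact: sub_finite_set (@fsupp_ycoef k) (prec_fin k). Qed.

Lemma lincomb_ycoef k : lincomb x (ycoef k) = ytri k.
Proof.
set r := fset_set [set l | prec l k]; have r_uniq : uniq r := fset_uniq _.
have r_le l : (l \in r) = `[< prec l k >].
  by rewrite in_fset_set // inE; apply/idP/idP => /asboolP.
have sub_r : fsupp (ycoef k) `<=` [set` r].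
  by move=> l /fsupp_ycoef lk /=; rewrite r_le asboolT.
rewrite (lincomb_seq x r_uniq sub_r) (bigD1_seq k) ?r_le ?asboolT //=.
rewrite ycoef_id scale1r -big_filter; congr (_ + _).
have lt_k l : (l \in [seq l <- r | l != k]) <-> (prec l k /\ l <> k).
  rewrite mem_filter r_le.
  by split=> [/andP[/eqP ? /asboolP]|[? /eqP ->]]; [|rewrite asboolT].
rewrite (fsbig_fwiden [seq l <- r | l != k]) ?filter_uniq //; last 2 first.
- by move=> l /lt_k.
- by move=> l [/= /lt_k].
apply: eq_big_seq => l /lt_k[lk lk_neq].
by rewrite /ycoef (introF eqP lk_neq) asboolT.
Qed.

Lemma ycoef_weight_le k l : abs (ycoef k l) * nrm (x l) <= nrm (x k).
Proof.
have [lk|not_lk] := pselect (prec l k); last first.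
  by rewrite ycoef_eq0 // abs0 // mul0r nrm_ge0.
rewrite -[nrm (x k)]mul1r ler_pM ?abs_ge0 ?nrm_ge0 ?nrm_x_le //.
rewrite /ycoef; case: eqP => [_|_]; first by rewrite abs1.
by rewrite asboolT // abs_c_le1.
Qed.

Definition weight d k : R := abs (d k) * nrm (x k).

Lemma weight_ge0 d k : 0 <= weight d k.
Proof. by rewrite mulr_ge0. Qed.

Lemma weight_gt0 d k : d k != 0 -> 0 < weight d k.
Proof. by move=> dk; rewrite mulr_gt0 ?nrm_x_gt0 ?abs_gt0. Qed.

Definition ycomb_coef d l : K := \sum_(k \in fsupp d) d k * ycoef k l.

Lemma lincomb_ytri d : finite_set (fsupp d) -> lincomb ytri d = lincomb x (ycomb_coef d).
Proof.
move=> fd; rewrite -(lincomb_comp x finite_fsupp_ycoef fd).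
by congr lincomb; apply: funext => k; rewrite lincomb_ycoef.
Qed.

Lemma finite_fsupp_ycomb_coef d :
  finite_set (fsupp d) -> finite_set (fsupp (ycomb_coef d)).
Proof.
move=> fd; apply: sub_finite_set (@fsupp_comp_sub _ _ ycoef d) _.
by apply: bigcup_finite => // k _; exact: finite_fsupp_ycoef.
Qed.

Lemma ycomb_coef_weight_le d M l : finite_set (fsupp d) -> 0 <= M ->
  (forall k, weight d k <= M) -> abs (ycomb_coef d l) * nrm (x l) <= M.
Proof.
move=> fd M_ge0 dM; rewrite /ycomb_coef fsbig_finite //.
apply: abs_sum_le => // k _; rewrite absM -mulrA; apply: le_trans (dM k).
by rewrite ler_wpM2l ?ycoef_weight_le.
Qed.

Definition dominant d k0 : Prop := [/\ d k0 != 0, forall k, weight d k <= weight d k0 &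
  forall k, prec k0 k -> k <> k0 -> weight d k < weight d k0].

Lemma exists_dominant d k1 :
  finite_set (fsupp d) -> d k1 != 0 -> exists k0, dominant d k0.
Proof.
move=> fd dk1.
pose lex k l := weight d k < weight d l \/ weight d k = weight d l /\ prec k l /\ k <> l.
have lex_irr k : ~ lex k k by case=> [|[_ [_]]]; rewrite ?ltxx.
have lex_trans k l m : lex k l -> lex l m -> lex k m.
  move=> [kl|[kl [lekl kl_neq]]] [lm|[lm [lelm lm_neq]]].
  - by left; apply: lt_trans lm.
  - by left; rewrite -lm.
  - by left; rewrite kl.
  right; split; first by rewrite kl.
  split; first exact: prec_trans lelm.
  by move=> km; apply: kl_neq; apply: prec_anti lekl _; rewrite km.
have [|k0 k0_supp k0_max] := @seq_maximal _ lex lex_irr lex_trans (fset_set (fsupp d)) k1.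
  by rewrite (mem_fset_fsupp _ fd).
rewrite (mem_fset_fsupp _ fd) in k0_supp.
have weight0 k : d k = 0 -> weight d k = 0.
  by move=> dk0; rewrite /weight dk0 abs0 // mul0r.
have k0_ge k : weight d k <= weight d k0.
  have [dk|/negPn/eqP/weight0->] := boolP (d k != 0); last exact: weight_ge0.
  rewrite leNgt; apply/negP => k0k.
  by apply: (k0_max k); [rewrite (mem_fset_fsupp _ fd) | left].
exists k0; split=> // k k0k k0k_neq; rewrite lt_neqAle k0_ge andbT.
have [dk|/negPn/eqP/weight0->] := boolP (d k != 0).
  apply/eqP => kk0; apply: (k0_max k); first by rewrite (mem_fset_fsupp _ fd).
  by right; split=> //; split=> // k0k_eq; apply: k0k_neq.
by rewrite eq_sym gt_eqF // weight_gt0.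
Qed.

Lemma abs_ycomb_coef_dominant d k0 : finite_set (fsupp d) -> dominant d k0 ->
  abs (ycomb_coef d k0) = abs (d k0).
Proof.
move=> fd [dk0 _ k0_strict]; rewrite /ycomb_coef fsbig_finite //.
rewrite (bigD1_seq k0) ?(mem_fset_fsupp _ fd) ?fset_uniq //= ycoef_id mulr1.
apply: absDl_eq => //; rewrite -(ltr_pM2r (nrm_x_gt0 k0)) -big_filter.
apply: abs_sum_lt => // [|k]; first exact: weight_gt0.
rewrite mem_filter (mem_fset_fsupp _ fd) => /andP[/eqP k_neq dk].
have [k0k|not_k0k] := pselect (prec k0 k); last first.
  by rewrite ycoef_eq0 // mulr0 abs0 // mul0r weight_gt0.
rewrite absM -mulrA; apply: le_lt_trans (k0_strict k k0k k_neq).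
by rewrite ler_wpM2l ?ycoef_weight_le.
Qed.

Lemma nrm_lincomb_dominant d k0 : finite_set (fsupp d) -> dominant d k0 ->
  nrm (lincomb ytri d) = weight d k0.
Proof.
move=> fd dom; have [_ k0_max _] := dom.
have coef_k0 : abs (ycomb_coef d k0) * nrm (x k0) = weight d k0.
  by rewrite abs_ycomb_coef_dominant.
rewrite lincomb_ytri // x_orth; last exact: finite_fsupp_ycomb_coef.
rewrite -coef_k0.
by apply: sup_range_attained => l; rewrite coef_k0 ycomb_coef_weight_le ?weight_ge0.
Qed.

Lemma nrm_lincomb_ytri d : finite_set (fsupp d) ->
  nrm (lincomb ytri d) = sup (range (weight d)).
Proof.
move=> fd; have [[k1 dk1]|d0] := pselect (exists k, d k != 0).
  have [k0 dom] := exists_dominant fd dk1; have [_ k0_max _] := dom.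
  by rewrite (nrm_lincomb_dominant fd dom); apply/esym/sup_range_attained.
have -> : d = fun=> 0.
  by apply: funext => k; apply: contrapT => dk; apply: d0; exists k; exact/eqP.
by rewrite lincomb0 -(lincomb0 x) x_orth // fsupp0.
Qed.

Lemma nrm_ytri k : nrm (ytri k) = nrm (x k).
Proof.
have ycoef_kk : abs (ycoef k k) * nrm (x k) = nrm (x k) by rewrite ycoef_id abs1 // mul1r.
rewrite -lincomb_ycoef x_orth; last exact: finite_fsupp_ycoef.
rewrite -ycoef_kk.
by apply: sup_range_attained => l; rewrite ycoef_kk ycoef_weight_le.
Qed.

Lemma lincomb_ytri_inj d d' : finite_set (fsupp d) -> finite_set (fsupp d') ->
  lincomb ytri d = lincomb ytri d' -> d = d'.
Proof.
move=> fd fd' dd'; apply: funext => k; apply/eqP; rewrite -subr_eq0; apply: contraT => dk.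
have fdd' := finite_fsuppB fd fd'.
have [k0 dom] := exists_dominant fdd' dk; have [dk0 _ _] := dom.
have := nrm_lincomb_dominant fdd' dom; rewrite lincombB // dd' subrr (nrm_eq0 0).2 //.
by move/eqP; rewrite eq_sym gt_eqF // weight_gt0.
Qed.

Lemma span_ytri_x l : span ytri (x l).
Proof.
elim/prec_ind: l => l IH.
have fP : finite_set [set m | prec m l /\ m <> l].
  by apply: sub_finite_set (prec_fin l) => m [].
rewrite -(addrK (\sum_(m \in [set m | prec m l /\ m <> l]) c m l *: x m) (x l)).
rewrite -/(ytri l); apply: spanD; first exact: span_gen.
rewrite -scaleN1r; apply: spanZ; rewrite fsbig_finite // big_seq.
elim/big_ind: _ => [|u v|m]; [exact: span0 | exact: spanD |].
by rewrite in_fset_set // inE => -[ml ml_neq]; apply/spanZ/IH.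
Qed.

Lemma ytri_basis : is_basis ytri.
Proof.
move=> v; have [d [[fd ->] _]] := x_basis v.
have [d' fd' ->] : span ytri (lincomb x d) by apply: span_lincomb span_ytri_x.
by exists d'; split=> // d'' [fd'' /lincomb_ytri_inj ->].
Qed.

Lemma ytri_orthogonal_basis :
  orthogonal_basis abs nrm ytri /\ forall k, nrm (ytri k) = nrm (x k).
Proof.
split; last exact: nrm_ytri.
split; first exact: ytri_basis.
move=> d fd; have -> : (fun l => abs (d l) * nrm (ytri l)) = weight d.
  by apply: funext => l; rewrite /weight nrm_ytri.
exact: nrm_lincomb_ytri.
Qed.

End TriangularPerturbation.

Theorem lemma2p5 (R : realType) (p : nat) (K : fieldType) (abs : K -> R)
  (HK : padic_complete_field p abs)
  (Y : lmodType K) (nrm : Y -> R) (HY : normed_space abs nrm)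
  (I : choiceType) (x : I -> Y) (Hx : orthogonal_basis abs nrm x)
  (le : I -> I -> Prop)
  (le_refl : forall k, le k k)
  (le_anti : forall k l, le k l -> le l k -> k = l)
  (le_trans : forall k l m, le k l -> le l m -> le k m)
  (le_min : forall S : set I, S !=set0 ->
      exists m, S m /\ forall l, S l -> le l m -> l = m)
  (le_fin : forall k, finite_set [set l | le l k])
  (Hmono : forall l k, le l k -> nrm (x l) <= nrm (x k))
  (c : I -> I -> K) (Hc : forall l k, le l k -> abs (c l k) <= 1) :
  let y := fun k => x k + \sum_(l \in [set l | le l k /\ l <> k]) c l k *: x l in
  orthogonal_basis abs nrm y /\ forall k, nrm (y k) = nrm (x k).
Proof.
move=> y; have [_ [abs_ge0 [abs_eq0 [absM absD]]] _ _] := HK.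
have [nrm_ge0 nrm_eq0 _ _] := HY; have [x_basis x_orth] := Hx.
exact: (ytri_orthogonal_basis abs_ge0 abs_eq0 absM absD nrm_ge0 nrm_eq0
  x_basis x_orth le_refl le_anti le_trans le_min le_fin Hmono Hc).
Qed.
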